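(* Let $N\ge2$, $\alpha,\beta>0$, $W:\mathbb{R}^2\to\mathbb{R}$, $W(x)=U(|x|)$ twice continuously differentiable, and let $\hat x\in\mathbb{R}^{2N}$ satisfy: (H1) $\sum_{j\ne i}\nabla W(\hat x_i-\hat x_j)=0$ for all $i$; (H2) the kernel of $G=G(\hat x)$ is exactly three-dimensional, spanned by $w_1=1_N\otimes(1,0)^T$, $w_2=1_N\otimes(0,1)^T$, $w_3=\bigl(I_N\otimes\begin{pmatrix}0&-1\\1&0\end{pmatrix}\bigr)\hat x$; (H3) every non-zero eigenvalue of $G$ has negative real part; (H4) $\hat x_1,\dots,\hat x_N$ are not all collinear. Let $m_0\in\mathbb{R}^2$ with $|m_0|^2=\alpha/\beta$ and define the $4N\times4N$ matrix $$F_B^B=\begin{pmatrix}0_{2N\times2N} & \begin{pmatrix}I_{2N-2}\\ -1_{N-1}^T\otimes I_2\end{pmatrix} & 0_{2N\times2}\\ \lceil G\rceil & -I_{N-1}\otimes 2\beta\, m_0m_0^T & 0_{(2N-2)\times2}\\ 0_{2\times2N}&0_{2\times(2N-2)}&-2\beta\, m_0m_0^T\end{pmatrix}.$$ Then $F_B^B$ has no generalized eigenvector for the eigenvalue $0$, i.e. $\ker (F_B^B)^2=\ker F_B^B$.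
   Context: $G(\hat x)\in\mathbb{R}^{2N\times2N}$ is the Jacobian of the system $\dot x_i=-\sum_{j\ne i}\nabla W(x_i-x_j)$ at $\hat x$: it has $2\times2$ blocks $G_{ii}=-\sum_{j\ne i}\operatorname{Hess}W(\hat x_i-\hat x_j)$ and $G_{ij}=\operatorname{Hess}W(\hat x_i-\hat x_j)$ for $i\ne j$. $\lceil G\rceil$ is the $(2N-2)\times2N$ matrix obtained from $G$ by deleting its last two rows. $1_n$ is the all-ones column vector, $0_{n\times p}$ the zero matrix, $\otimes$ the Kronecker product. ($F_B^B$ is the linearization of the second-order swarming model at a flock, written in mean-velocity coordinates and restricted to mean-velocity-consistent perturbations.) *)

From HB Require Import structures.
From mathcomp Require Import all_boot all_order all_algebra.
From mathcomp Require Import all_classical all_reals.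
From mathcomp Require Import topology normedtype derive.
From mathcomp Require Import complex mxtens.
Set Implicit Arguments. Unset Strict Implicit. Unset Printing Implicit Defensive.
Import Order.TTheory GRing.Theory Num.Theory.
Import numFieldNormedType.Exports.
Local Open Scope ring_scope.

Section Defs.
Variable R : realType.

Definition e2 (k : 'I_2) : 'rV[R]_2 := delta_mx 0 k.

Definition eucl2 (x : 'rV[R]_2) : R := Num.sqrt (x 0 0 ^+ 2 + x 0 1 ^+ 2).

Definition C2 (W : 'rV[R]_2 -> R) : Prop :=
  (forall x, differentiable W x) /\
  (forall (l : 'I_2) x, differentiable ('D_(e2 l) W) x) /\
  (forall (k l : 'I_2), continuous ('D_(e2 k) ('D_(e2 l) W))).

Definition gradW (W : 'rV[R]_2 -> R) (x : 'rV[R]_2) : 'rV[R]_2 :=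
  \row_k 'D_(e2 k) W x.
Definition hessW (W : 'rV[R]_2 -> R) (x : 'rV[R]_2) : 'M[R]_2 :=
  \matrix_(k, l) 'D_(e2 k) ('D_(e2 l) W) x.

(* a configuration x in R^{2N}, indexed so that x_i = (x_{2i}, x_{2i+1})
   (consistent with the Kronecker product 1_N (x) v) *)
Definition pt {N : nat} (x : 'cV[R]_(N * 2)) (i : 'I_N) : 'rV[R]_2 :=
  \row_a x (mxtens_index (i, a)) 0.

Definition Gmx (W : 'rV[R]_2 -> R) {N : nat} (x : 'cV[R]_(N * 2))
  : 'M[R]_(N * 2) :=
  \matrix_(p, q)
    let i := (mxtens_unindex p).1 in let a := (mxtens_unindex p).2 in
    let j := (mxtens_unindex q).1 in let b := (mxtens_unindex q).2 in
    if i == j then - \sum_(k < N | k != i) hessW W (pt x i - pt x k) a b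
    else hessW W (pt x i - pt x j) a b.

Lemma ceil_proof (N : nat) : (N.-1 * 2 <= N * 2)%N.
Proof. by rewrite leq_mul2r leq_pred orbT. Qed.

Definition ceilmx {N : nat} (G : 'M[R]_(N * 2)) : 'M[R]_(N.-1 * 2, N * 2) :=
  \matrix_(p, q) G (widen_ord (ceil_proof N) p) q.

Definition rot2 : 'M[R]_2 :=
  \matrix_(a, b) (if (a == 0) && (b == 1) then -1
                  else if (a == 1) && (b == 0) then 1 else 0).

Definition ones (n : nat) : 'cV[R]_n := const_mx 1.

Definition w1 (N : nat) : 'cV[R]_(N * 2) := ones N *t (delta_mx 0 0 : 'cV[R]_2).
Definition w2 (N : nat) : 'cV[R]_(N * 2) := ones N *t (delta_mx 1 0 : 'cV[R]_2).
Definition w3 {N : nat} (x : 'cV[R]_(N * 2)) : 'cV[R]_(N * 2) :=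
  ((1%:M : 'M[R]_N) *t rot2) *m x.

Lemma split_proof (N : nat) : (0 < N)%N -> (N.-1 * 2 + 1 * 2 = N * 2)%N.
Proof. by case: N => // n _; rewrite /= mulSn addnC. Qed.

Definition FBB {N : nat} (hN : (0 < N)%N) (G : 'M[R]_(N * 2))
  (beta : R) (m0 : 'cV[R]_2) : 'M[R]_(N * 2 + (N.-1 * 2 + 2)) :=
  let M := (2 * beta) *: (m0 *m m0^T) in
  let T : 'M[R]_(N * 2, N.-1 * 2) :=
    castmx (split_proof hN, erefl)
      (col_mx (1%:M : 'M[R]_(N.-1 * 2))
              ((- (ones N.-1)^T) *t (1%:M : 'M[R]_2))) in
  block_mx (0 : 'M[R]_(N * 2, N * 2))
           (row_mx T (0 : 'M[R]_(N * 2, 2)))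
           (col_mx (ceilmx G) (0 : 'M[R]_(2, N * 2)))
           (block_mx (- ((1%:M : 'M[R]_N.-1) *t M)) (0 : 'M[R]_(N.-1 * 2, 2))
                     (0 : 'M[R]_(2, N.-1 * 2)) (- M)).

End Defs.

From HB Require Import structures.
From mathcomp Require Import all_boot all_order all_algebra.
From mathcomp Require Import all_classical all_reals.
From mathcomp Require Import topology normedtype derive.
From mathcomp Require Import complex mxtens.
From mathcomp Require Import ring lra.
Import Order.TTheory GRing.Theory Num.Theory.
Import numFieldNormedType.Exports.
Local Open Scope ring_scope.
Set Implicit Arguments. Unset Strict Implicit. Unset Printing Implicit Defensive.

(* Write v = (a, b, c) along the blocks of F_B^B, so that
   F v = (T b, ⌈G⌉ a - (I ⊗ M) b, - M c) with M = 2β m0 m0^T.  If F² v = 0, the injectivity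
   of T gives ⌈G⌉ a = (I ⊗ M) b, and M² = 2β|m0|² M gives M c = 0; it remains to show that
   u = T b vanishes.  Since W is even, G is symmetric by Schwarz's theorem, and as it kills
   w1 and w2 the blocks of any G z sum to zero.  Hence ⌈G⌉ u = 0 already forces G u = 0, so
   u = c1 w1 + c2 w2 + c3 w3, and the blocks of G a are 2β ν_i m0 with ν_i = m0 · u_i.
   Pairing G a with w3 ∈ ker G gives Σ ν_i φ_i = 0 for φ_i = m0 · (w3)_i, while
   ν_i = κ + c3 φ_i and Σ ν_i = 0 because the blocks of T b sum to zero; thus Σ ν_i² = 0.
   If c3 were non-zero the φ_i would all be equal and the points x_i collinear, so c3 = 0,
   and Σ u_i = 0 then gives c1 = c2 = 0. *)

Section Parity.
Variables (R : realType) (V W : normedModType R).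

Lemma derive_comp_opp (f : V -> W) (v y : V) : differentiable f (- y) ->
  'D_v (f \o -%R) y = - 'D_v f (- y).
Proof.
move=> df; have -> : 'D_v (f \o -%R) y = 'D_(- v) f (- y).
  rewrite /derive; set g1 := fun h => h^-1 *: _; set g2 := fun h => h^-1 *: _.
  suff -> : g1 = g2 by [].
  by apply: funext => h; rewrite /g1 /g2 /= opprD scalerN.
by rewrite !deriveE // linearN.
Qed.

Lemma derive_even (f : V -> W) (v y : V) : f \o -%R = f ->
  differentiable f (- y) -> 'D_v f (- y) = - 'D_v f y.
Proof. by move=> fE df; rewrite -{2}fE derive_comp_opp // opprK. Qed.

Lemma derive_odd (f : V -> W) (v y : V) : f \o -%R = - f ->
  differentiable f (- y) -> differentiable f y -> 'D_v f (- y) = 'D_v f y.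
Proof.
move=> fO df df'; apply: oppr_inj.
by rewrite -derive_comp_opp // fO deriveN //; apply: diff_derivable.
Qed.

End Parity.

Section Schwarz.
Variables (R : realType) (V : normedModType R).
Local Open Scope classical_set_scope.

Lemma is_derive_line (f : V -> R) (x v : V) (s : R) :
  derivable f (x + s *: v) v ->
  is_derive s 1 (fun t : R => f (x + t *: v)) ('D_v f (x + s *: v)).
Proof.
set a := x + s *: v => df.
have E : (fun h : R => h^-1 *: (((fun t : R => f (x + t *: v)) \o shift s) (h *: 1)
            - f (x + s *: v)))
       = (fun h : R => h^-1 *: ((f \o shift a) (h *: v) - f a)).
  apply: funext => h /=; congr (_ *: (f _ - _)).
  by rewrite /a [h *: 1]mulr1 scalerDl addrCA addrC.
by split; rewrite /derivable /derive E.
Qed.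

Lemma second_difference_mvt (f : V -> R) (u w x : V) (h : R) :
  (forall y, derivable f y u) -> (forall y, derivable ('D_u f) y w) -> 0 < h ->
  exists xi eta : R, [/\ 0 < xi < h, 0 < eta < h &
    f (x + h *: w + h *: u) - f (x + h *: u) - f (x + h *: w) + f x
      = h * h * 'D_w ('D_u f) (x + xi *: u + eta *: w)].
Proof.
move=> df ddf h0.
pose phi := (fun t : R => f (x + h *: w + t *: u)) - (fun t : R => f (x + t *: u)).
have dphi (t : R) : is_derive t 1 phi
    ('D_u f (x + h *: w + t *: u) - 'D_u f (x + t *: u)).
  by apply: is_deriveB; apply: is_derive_line.
have cphi : {within `[0, h], continuous phi}.
  by apply: derivable_within_continuous => t _; case: (dphi t).
have [xi xiI E1] := MVT h0 (fun t _ => dphi t) cphi.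
pose psi t := 'D_u f (x + xi *: u + t *: w).
have dpsi (t : R) : is_derive t 1 psi ('D_w ('D_u f) (x + xi *: u + t *: w)).
  exact: is_derive_line.
have cpsi : {within `[0, h], continuous psi}.
  by apply: derivable_within_continuous => t _; case: (dpsi t).
have [eta etaI E2] := MVT h0 (fun t _ => dpsi t) cpsi.
exists xi, eta; split; [by move: xiI; rewrite in_itv | by move: etaI; rewrite in_itv |].
have ephi t : phi t = f (x + h *: w + t *: u) - f (x + t *: u) by [].
move: E1 E2; rewrite !ephi /psi !scale0r !addr0 subr0 => E1 E2.
rewrite (addrAC x (h *: w) (xi *: u)) in E1.
by rewrite mulrC mulrA -E2 -E1; ring.
Qed.

Lemma eq_continuous_approx (T : pseudoMetricType R) (A B : T -> R) (x : T) :
  {for x, continuous A} -> {for x, continuous B} ->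
  (forall e : R, 0 < e -> exists p q : T, [/\ ball x e p, ball x e q & A p = B q]) ->
  A x = B x.
Proof.
move=> cA cB close; apply/eqP; rewrite -subr_eq0 -normr_le0.
apply/ler_addgt0Pr => e e0; rewrite add0r.
have e20 : 0 < e / 2 by rewrite divr_gt0.
have : \forall y \near x, `|A x - A y| < e / 2 /\ `|B x - B y| < e / 2.
  near=> y; split; near: y.
  - exact: (cvgrPdist_lt _ _).1 cA _ e20.
  - exact: (cvgrPdist_lt _ _).1 cB _ e20.
case/nbhs_ballP => d d0 near_x; have [p [q [px qx ApBq]]] := close d d0.
have [Ap _] := near_x p px; have [_ Bq] := near_x q qx.
have -> : A x - B x = (A x - A p) + (B q - B x) by rewrite ApBq; ring.
rewrite (le_trans (ler_normD _ _)) // [e]splitr ltW // ltrD // distrC //.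
Unshelve. all: by end_near.
Qed.

Theorem schwarz (f : V -> R) (u w x : V) :
  (forall y, derivable f y u) -> (forall y, derivable f y w) ->
  (forall y, derivable ('D_u f) y w) -> (forall y, derivable ('D_w f) y u) ->
  {for x, continuous ('D_w ('D_u f))} -> {for x, continuous ('D_u ('D_w f))} ->
  'D_w ('D_u f) x = 'D_u ('D_w f) x.
Proof.
move=> du dw duw dwu cuw cwu; apply: eq_continuous_approx cuw cwu _ => e e0.
have s0 : 0 < `|u| + `|w| + 1 by rewrite ltr_wpDl // addr_ge0.
pose h := e / (`|u| + `|w| + 1).
have h0 : 0 < h by rewrite divr_gt0.
have near_x a b : 0 < a < h -> 0 < b < h -> ball x e (x + a *: u + b *: w).
  case/andP => a0 ah /andP [b0 bh].
  rewrite -ball_normE /ball_ /= -addrA opprD addNKr normrN.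
  apply: (le_lt_trans (ler_normD _ _)); rewrite !normrZ !gtr0_norm //.
  have eE : e = h * (`|u| + `|w| + 1) by rewrite /h divfK // lt0r_neq0.
  by rewrite eE; have := normr_ge0 u; have := normr_ge0 w; nra.
have [xi [eta [xiI etaI E1]]] := second_difference_mvt x du duw h0.
have [xi' [eta' [xiI' etaI' E2]]] := second_difference_mvt x dw dwu h0.
exists (x + xi *: u + eta *: w), (x + eta' *: u + xi' *: w); split.
- exact: near_x.
- exact: near_x.
- apply: (mulfI (mulf_neq0 (lt0r_neq0 h0) (lt0r_neq0 h0))).
  rewrite (addrAC x (xi' *: w)) in E2.
  rewrite -E1 -E2 (addrAC x (h *: w)); ring.
Qed.

End Schwarz.

Section Hessian.
Variable R : realType.
Implicit Types (W : 'rV[R]_2 -> R) (d : 'rV[R]_2).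

Lemma hessW_sym W : C2 W -> forall d a b, hessW W d a b = hessW W d b a.
Proof.
case=> dW [ddW cW] d a b; rewrite !mxE.
by apply: schwarz => [y|y|y|y||]; try exact: diff_derivable; exact: cW.
Qed.

Lemma hessW_even W : W \o -%R = W -> C2 W -> forall d, hessW W (- d) = hessW W d.
Proof.
move=> W_even [dW [ddW _]] d; apply/matrixP => a b; rewrite !mxE.
apply: derive_odd => //; apply: funext => y /=.
by rewrite derive_even.
Qed.

Lemma Gmx_sym W N (x : 'cV[R]_(N * 2)) : W \o -%R = W -> C2 W ->
  (Gmx W x)^T = Gmx W x.
Proof.
move=> W_even hW; apply/matrixP => p q; rewrite !mxE.
case: (mxtens_unindex p) => i a; case: (mxtens_unindex q) => j b /=.
case: (eqVneq i j) => [<-|ij].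
  by congr (- _); apply: eq_bigr => k _; apply: hessW_sym.
have -> : hessW W (pt x j - pt x i) = hessW W (pt x i - pt x j).
  by rewrite -opprB hessW_even.
exact: hessW_sym.
Qed.

End Hessian.

Section BlockCoordinates.
Variable R : pzRingType.

Definition blk {m : nat} (z : 'cV[R]_(m * 2)) (i : 'I_m) (a : 'I_2) : R :=
  z (mxtens_index (i, a)) 0.

Lemma blkP m (y z : 'cV[R]_(m * 2)) : (forall i a, blk y i a = blk z i a) -> y = z.
Proof.
move=> yz; apply/colP => p; case: (mxtens_indexP p) => i a; exact: yz.
Qed.

Lemma blkD m (y z : 'cV[R]_(m * 2)) i a : blk (y + z) i a = blk y i a + blk z i a.
Proof. by rewrite /blk mxE. Qed.

Lemma blkZ m (c : R) (z : 'cV[R]_(m * 2)) i a : blk (c *: z) i a = c * blk z i a.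
Proof. by rewrite /blk mxE. Qed.

Lemma blk0 m i a : blk (0 : 'cV[R]_(m * 2)) i a = 0.
Proof. by rewrite /blk mxE. Qed.

Lemma I2P (a : 'I_2) : a = 0 \/ a = 1.
Proof. by case: a => -[|[|]] // ?; [left|right]; apply: val_inj. Qed.

Lemma sum_ord2 (F : 'I_2 -> R) : \sum_(a < 2) F a = F 0 + F 1.
Proof. by rewrite big_ord_recr big_ord1; congr (F _ + F _); apply: val_inj. Qed.

Lemma big_mxtens m (F : 'I_(m * 2) -> R) :
  \sum_q F q = \sum_(i < m) \sum_(a < 2) F (mxtens_index (i, a)).
Proof.
rewrite pair_big /= (reindex (@mxtens_index m 2)) /=; first by apply: eq_bigr => -[].
by exists (@mxtens_unindex m 2) => q _; rewrite (mxtens_indexK, mxtens_unindexK).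
Qed.

Lemma blk_mulmx m p (A : 'M[R]_(m * 2, p * 2)) (z : 'cV[R]_(p * 2)) i a :
  blk (A *m z) i a =
  \sum_(j < p) \sum_(b < 2) A (mxtens_index (i, a)) (mxtens_index (j, b)) * blk z j b.
Proof. by rewrite /blk mxE big_mxtens. Qed.

Lemma trmx_mul_blk m (w z : 'cV[R]_(m * 2)) :
  (w^T *m z) 0 0 = \sum_(i < m) \sum_(a < 2) blk w i a * blk z i a.
Proof.
by rewrite mxE big_mxtens; apply: eq_bigr => i _; apply: eq_bigr => a _; rewrite mxE.
Qed.

Lemma blk_tens1mx m (M : 'M[R]_2) (z : 'cV[R]_(m * 2)) i a :
  blk ((1%:M *t M) *m z) i a = \sum_(b < 2) M a b * blk z i b.
Proof.
rewrite blk_mulmx (bigD1 i) //= [X in _ + X]big1 ?addr0 => [|j ji].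
  by apply: eq_bigr => b _; rewrite tensmxE !mxE eqxx mul1r.
by apply: big1 => b _; rewrite tensmxE !mxE eq_sym (negbTE ji) !mul0r.
Qed.

End BlockCoordinates.

Section Flock.
Variable R : realType.

(* The let-bound blocks T and 2β m0 m0^T of [FBB]. *)
Definition tailmx {N : nat} (hN : (0 < N)%N) : 'M[R]_(N * 2, N.-1 * 2) :=
  castmx (split_proof hN, erefl)
    (col_mx (1%:M : 'M[R]_(N.-1 * 2)) ((- (ones R N.-1)^T) *t (1%:M : 'M[R]_2))).

Definition dampmx (beta : R) (m0 : 'cV[R]_2) : 'M[R]_2 := (2 * beta) *: (m0 *m m0^T).

Lemma dampmx_mul_eq0 beta (m0 c : 'cV[R]_2) : 0 < beta ->
  m0 0 0 ^+ 2 + m0 1 0 ^+ 2 != 0 ->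
  dampmx beta m0 *m (dampmx beta m0 *m c) = 0 -> dampmx beta m0 *m c = 0.
Proof.
move=> beta0 m0_neq0; have sq : dampmx beta m0 *m dampmx beta m0 =
    (2 * beta * (m0 0 0 ^+ 2 + m0 1 0 ^+ 2)) *: dampmx beta m0.
  rewrite /dampmx -scalemxAl -scalemxAr scalerA mulmxA -(mulmxA m0).
  rewrite [m0^T *m m0]mx11_scalar mul_mx_scalar -scalemxAl scalerA.
  by rewrite mxE sum_ord2 !mxE scalerA; congr (_ *: _); ring.
rewrite mulmxA sq -scalemxAl => /eqP; rewrite scaler_eq0 => /orP [|/eqP //].
by rewrite !mulf_eq0 (negbTE m0_neq0) pnatr_eq0 (gt_eqF beta0).
Qed.

Lemma FBB_mul_col N (hN : (0 < N)%N) (G : 'M[R]_(N * 2)) beta m0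
    (a : 'cV[R]_(N * 2)) (b : 'cV[R]_(N.-1 * 2)) (c : 'cV[R]_2) :
  FBB hN G beta m0 *m col_mx a (col_mx b c) =
  col_mx (tailmx hN *m b)
    (col_mx (ceilmx G *m a - (1%:M *t dampmx beta m0) *m b) (- (dampmx beta m0 *m c))).
Proof.
rewrite /FBB -/(dampmx beta m0) -/(tailmx hN).
rewrite mul_block_col mul_row_col mul_col_mx !mul_block_col.
by rewrite !mul0mx !addr0 !add0r add_col_mx ?addr0 ?add0r !mulNmx.
Qed.

Lemma ord_maxVwiden n (i : 'I_n.+1) :
  i = ord_max \/ exists j : 'I_n, i = widen_ord (leqnSn n) j.
Proof.
case: (unliftP ord_max i) => [j ->|->]; last by left.
by right; exists j; apply: val_inj; apply: lift_max.
Qed.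

Lemma sum_recr_eq0 n (F : 'I_n.+1 -> R) : \sum_i F i = 0 ->
  F ord_max = - \sum_(i < n) F (widen_ord (leqnSn n) i).
Proof. by rewrite big_ord_recr /= addrC => /eqP; rewrite addr_eq0 => /eqP. Qed.

Section Tail.
Variables (n : nat) (hN : (0 < n.+1)%N) (b : 'cV[R]_(n * 2)).

Lemma tailmx_mul : tailmx hN *m b =
  castmx (split_proof hN, erefl) (col_mx b (((- (ones R n)^T) *t 1%:M) *m b)).
Proof. by rewrite -[X in col_mx X _]mul1mx -mul_col_mx castmx_mul castmx_id. Qed.

Lemma blk_tailmx_widen i a : blk (tailmx hN *m b) (widen_ord (leqnSn n) i) a = blk b i a.
Proof.
rewrite tailmx_mul /blk castmxE /= cast_ord_id.
rewrite (_ : cast_ord _ _ = lshift (1 * 2) (mxtens_index (i, a))) ?col_mxEu //.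
exact: val_inj.
Qed.

Lemma blk_tailmx_max a : blk (tailmx hN *m b) ord_max a = - \sum_(i < n) blk b i a.
Proof.
rewrite tailmx_mul /blk castmxE /= cast_ord_id.
rewrite (_ : cast_ord _ _ = rshift (n * 2) (mxtens_index (ord0 : 'I_1, a))); last first.
  by apply: val_inj; rewrite /= mul0n add0n.
rewrite col_mxEd -/(blk _ _ _) blk_mulmx -sumrN; apply: eq_bigr => i _.
rewrite sum_ord2 !tensmxE !mxE.
by case: (I2P a) => -> /=; rewrite /blk; ring.
Qed.

Lemma sum_blk_tailmx a : \sum_(i < n.+1) blk (tailmx hN *m b) i a = 0.
Proof.
rewrite big_ord_recr /= blk_tailmx_max.
by under eq_bigr => i _ do rewrite blk_tailmx_widen; rewrite subrr.
Qed.

Lemma tailmx_mul_eq0 : tailmx hN *m b = 0 -> b = 0.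
Proof. by move=> Tb0; apply: blkP => i a; rewrite -blk_tailmx_widen Tb0 !blk0. Qed.

End Tail.

Lemma blk_ceilmx n (G : 'M[R]_(n.+1 * 2)) (z : 'cV[R]_(n.+1 * 2)) i a :
  blk (ceilmx G *m z) i a = blk (G *m z) (widen_ord (leqnSn n) i) a.
Proof.
rewrite /blk !mxE; apply: eq_bigr => q _; rewrite mxE.
by congr (G _ q * _); apply: val_inj.
Qed.

Lemma blk_w1 N i a : blk (w1 R N) i a = (a == 0)%:R.
Proof.
by rewrite /blk /w1 mxE (mxtens_indexK (i, a)) !mxE /= [Ordinal _]ord1 eqxx andbT mul1r.
Qed.

Lemma blk_w2 N i a : blk (w2 R N) i a = (a == 1)%:R.
Proof.
by rewrite /blk /w2 mxE (mxtens_indexK (i, a)) !mxE /= [Ordinal _]ord1 eqxx andbT mul1r.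
Qed.

Lemma blk_w3 N (x : 'cV[R]_(N * 2)) i :
  blk (w3 x) i 0 = - blk x i 1 /\ blk (w3 x) i 1 = blk x i 0.
Proof.
have -> : w3 x = (1%:M *t rot2 R) *m x by [].
by rewrite !blk_tens1mx !sum_ord2 !mxE /=; split; ring.
Qed.

Definition collinear {N : nat} (p : 'I_N -> 'rV[R]_2) : Prop :=
  exists p0 d : 'rV[R]_2, d != 0 /\ forall i, exists t : R, p i = p0 + t *: d.

Lemma collinear_line N (p : 'I_N -> 'rV[R]_2) (m : 'cV[R]_2) (C : R) :
  m 0 0 ^+ 2 + m 1 0 ^+ 2 != 0 ->
  (forall i, m 1 0 * p i 0 0 - m 0 0 * p i 0 1 = C) -> collinear p.
Proof.
set s := _ + _ => s0 onl.
exists (\row_j (if j == 0 then C * m 1 0 / s else - (C * m 0 0) / s)), m^T; split.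
  apply: contra s0 => /eqP /rowP mT0.
  have := mT0 0; have := mT0 1; rewrite /s !mxE => -> ->.
  by rewrite expr0n addr0.
move=> i; exists ((m 0 0 * p i 0 0 + m 1 0 * p i 0 1) / s).
by apply/rowP => j; rewrite !mxE; case: (I2P j) => -> /=; rewrite -(onl i) /s; field.
Qed.

Definition blkdot (m : 'cV[R]_2) {N : nat} (u : 'cV[R]_(N * 2)) (i : 'I_N) : R :=
  \sum_(a < 2) m a 0 * blk u i a.

Lemma sum_blkdot (m : 'cV[R]_2) N (u : 'cV[R]_(N * 2)) :
  (forall a, \sum_i blk u i a = 0) -> \sum_i blkdot m u i = 0.
Proof.
by move=> sum_u; rewrite exchange_big big1 // => a _; rewrite -mulr_sumr sum_u mulr0.
Qed.

Lemma affine_orthogonal_eq0 (I : finType) (nu phi : I -> R) (k c : R) :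
  (forall i, nu i = k + c * phi i) ->
  \sum_i nu i = 0 -> \sum_i nu i * phi i = 0 -> forall i, nu i = 0.
Proof.
move=> nuE sum_nu orth.
have : \sum_i nu i ^+ 2 = 0.
  transitivity (\sum_i (k * nu i + c * (nu i * phi i))).
    by apply: eq_bigr => i _; rewrite expr2 {1}nuE; ring.
  by rewrite big_split /= -!mulr_sumr sum_nu orth !mulr0 addr0.
move/psumr_eq0P => sq0 i; apply/eqP; rewrite -sqrf_eq0 sq0 // => j _.
exact: sqr_ge0.
Qed.

Section FlockKernel.
Variables (n : nat) (G : 'M[R]_(n.+1 * 2)) (xh : 'cV[R]_(n.+1 * 2)) (m0 : 'cV[R]_2).
Hypotheses (G_sym : G^T = G) (Gw1 : G *m w1 R n.+1 = 0) (Gw2 : G *m w2 R n.+1 = 0).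
Hypothesis Gw3 : G *m w3 xh = 0.
Hypothesis kerG : forall u, G *m u = 0 ->
  exists c1 c2 c3 : R, u = c1 *: w1 R n.+1 + c2 *: w2 R n.+1 + c3 *: w3 xh.
Hypothesis xh_noncollinear : ~ collinear (pt xh).
Hypothesis m0_neq0 : m0 0 0 ^+ 2 + m0 1 0 ^+ 2 != 0.

Lemma orth_ker_Gmul (w z : 'cV[R]_(n.+1 * 2)) : G *m w = 0 ->
  \sum_i \sum_(a < 2) blk w i a * blk (G *m z) i a = 0.
Proof.
move=> Gw; rewrite -trmx_mul_blk mulmxA -{1}G_sym -trmx_mul Gw trmx0 mul0mx.
by rewrite mxE.
Qed.

Lemma sum_blk_Gmul (z : 'cV[R]_(n.+1 * 2)) a : \sum_i blk (G *m z) i a = 0.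
Proof.
case: (I2P a) => ->;
  [rewrite -[RHS](orth_ker_Gmul z Gw1) | rewrite -[RHS](orth_ker_Gmul z Gw2)];
  by apply: eq_bigr => i _; rewrite sum_ord2 ?blk_w1 ?blk_w2 /=; ring.
Qed.

Lemma ceilmx_mul_eq0 (z : 'cV[R]_(n.+1 * 2)) : ceilmx G *m z = 0 -> G *m z = 0.
Proof.
move=> Gz0; have top i a : blk (G *m z) (widen_ord (leqnSn n) i) a = 0.
  by rewrite -blk_ceilmx Gz0 blk0.
apply: blkP => i a; rewrite blk0; case: (ord_maxVwiden i) => [->|[j ->] //].
by rewrite (sum_recr_eq0 (sum_blk_Gmul z a)) big1 ?oppr0.
Qed.

Lemma blk_Gmul_last (u z : 'cV[R]_(n.+1 * 2)) (k : R) :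
  (forall a, \sum_i blk u i a = 0) ->
  (forall i a, blk (G *m z) (widen_ord (leqnSn n) i) a =
               k * m0 a 0 * blkdot m0 u (widen_ord (leqnSn n) i)) ->
  forall i a, blk (G *m z) i a = k * m0 a 0 * blkdot m0 u i.
Proof.
move=> sum_u top i a; case: (ord_maxVwiden i) => [->|[j ->] //].
rewrite (sum_recr_eq0 (sum_blk_Gmul z a)) (sum_recr_eq0 (sum_blkdot m0 sum_u)).
by under eq_bigr => j _ do rewrite top; rewrite -mulr_sumr mulrN.
Qed.

Lemma blkdot_orth_w3 (u z : 'cV[R]_(n.+1 * 2)) (k : R) : k != 0 ->
  (forall i a, blk (G *m z) i a = k * m0 a 0 * blkdot m0 u i) ->
  \sum_i blkdot m0 u i * blkdot m0 (w3 xh) i = 0.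
Proof.
move=> k0 Gz; apply: (mulfI k0); rewrite mulr0 -[RHS](orth_ker_Gmul z Gw3) mulr_sumr.
by apply: eq_bigr => i _; rewrite [RHS]sum_ord2 !Gz /blkdot !sum_ord2; ring.
Qed.

Lemma w3_coef_eq0 (u : 'cV[R]_(n.+1 * 2)) (c1 c2 c3 : R) :
  u = c1 *: w1 R n.+1 + c2 *: w2 R n.+1 + c3 *: w3 xh ->
  (forall a, \sum_i blk u i a = 0) ->
  \sum_i blkdot m0 u i * blkdot m0 (w3 xh) i = 0 -> c3 = 0.
Proof.
move=> uE sum_u orth.
have nuE i : blkdot m0 u i = (m0 0 0 * c1 + m0 1 0 * c2) + c3 * blkdot m0 (w3 xh) i.
  by rewrite uE /blkdot !sum_ord2 !blkD !blkZ !blk_w1 !blk_w2 /=; ring.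
have nu0 := affine_orthogonal_eq0 nuE (sum_blkdot m0 sum_u) orth.
(* For c3 != 0, [nu0] makes m0 · (w3)_i independent of i: the points lie on a line. *)
apply: contra_notP xh_noncollinear => /eqP c3n.
apply: (collinear_line (C := - (m0 0 0 * c1 + m0 1 0 * c2) / c3) m0_neq0) => i.
apply: (mulfI c3n); rewrite mulrCA divff // mulr1 !mxE -/(blk _ _ _) -/(blk _ _ _).
apply/eqP; rewrite -addr_eq0 addrC; apply/eqP; rewrite -(nu0 i) nuE /blkdot sum_ord2.
by rewrite (blk_w3 xh i).1 (blk_w3 xh i).2; ring.
Qed.

Lemma kerG_eq0 (u : 'cV[R]_(n.+1 * 2)) : G *m u = 0 ->
  (forall a, \sum_i blk u i a = 0) ->
  \sum_i blkdot m0 u i * blkdot m0 (w3 xh) i = 0 -> u = 0.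
Proof.
move=> /kerG [c1 [c2 [c3 uE]]] sum_u orth.
have c30 := w3_coef_eq0 uE sum_u orth.
have blk_u i a : blk u i a = blk u ord0 a.
  by rewrite uE c30 scale0r addr0 !blkD !blkZ !blk_w1 !blk_w2.
apply: blkP => i a; rewrite blk0 blk_u; move: (sum_u a).
under eq_bigr do rewrite blk_u.
by rewrite sumr_const card_ord => /eqP; rewrite mulrn_eq0 => /eqP.
Qed.

Lemma FBB_sq_mul_eq0 (hN : (0 < n.+1)%N) (beta : R)
    (v : 'cV[R]_(n.+1 * 2 + (n.+1.-1 * 2 + 2))) : 0 < beta ->
  FBB hN G beta m0 *m (FBB hN G beta m0 *m v) = 0 -> FBB hN G beta m0 *m v = 0.
Proof.
move=> beta0; rewrite -[v]vsubmxK -[dsubmx v]vsubmxK !FBB_mul_col.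
set a := usubmx v; set b := usubmx (dsubmx v); set c := dsubmx (dsubmx v).
move/eqP; rewrite !col_mx_eq0 => /andP [/eqP/tailmx_mul_eq0 y0 /andP [/eqP Gu /eqP MMc]].
have Mc : dampmx beta m0 *m c = 0.
  by apply: dampmx_mul_eq0; rewrite // -[LHS]opprK -mulmxN.
have Gu0 : G *m (tailmx hN *m b) = 0.
  by apply: ceilmx_mul_eq0; rewrite -[RHS]Gu y0 mulmx0 subr0.
have top i a' : blk (G *m a) (widen_ord (leqnSn n) i) a' =
    2 * beta * m0 a' 0 * blkdot m0 (tailmx hN *m b) (widen_ord (leqnSn n) i).
  move/eqP: y0; rewrite subr_eq0 => /eqP Ga.
  rewrite -blk_ceilmx Ga blk_tens1mx /blkdot mulr_sumr; apply: eq_bigr => a'' _.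
  by rewrite blk_tailmx_widen /dampmx !mxE big_ord1 !mxE; ring.
have sum_u := sum_blk_tailmx hN b.
have k0 : 2 * beta != 0 by rewrite lt0r_neq0 // mulr_gt0.
have orth := blkdot_orth_w3 k0 (blk_Gmul_last sum_u top).
by rewrite (kerG_eq0 Gu0 sum_u orth) y0 Mc oppr0 !col_mx0.
Qed.

End FlockKernel.

End Flock.

Theorem lemma3 (R : realType) (N : nat) (hN : (2 <= N)%N) (alpha beta : R)
  (halpha : 0 < alpha) (hbeta : 0 < beta)
  (U : R -> R) (W : 'rV[R]_2 -> R)
  (hWU : forall x, W x = U (eucl2 x)) (hW : C2 W)
  (xh : 'cV[R]_(N * 2))
  (H1 : forall i : 'I_N, \sum_(j < N | j != i) gradW W (pt xh i - pt xh j) = 0)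
  (H2span : forall v : 'cV[R]_(N * 2),
     Gmx W xh *m v = 0 <->
     exists c1 c2 c3 : R, v = c1 *: w1 R N + c2 *: w2 R N + c3 *: w3 xh)
  (H2indep : forall c1 c2 c3 : R,
     c1 *: w1 R N + c2 *: w2 R N + c3 *: w3 xh = 0 ->
     [/\ c1 = 0, c2 = 0 & c3 = 0])
  (H3 : forall lam : R[i],
     eigenvalue (map_mx (fun r : R => Complex r 0) (Gmx W xh)) lam -> lam != 0 ->
     complex.Re lam < 0)
  (H4 : ~ exists (p d : 'rV[R]_2), d != 0 /\
          forall i : 'I_N, exists t : R, pt xh i = p + t *: d)
  (m0 : 'cV[R]_2) (hm0 : m0 0 0 ^+ 2 + m0 1 0 ^+ 2 = alpha / beta) :
  let F := FBB (ltnW hN) (Gmx W xh) beta m0 in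
  forall v : 'cV[R]_(N * 2 + (N.-1 * 2 + 2)),
    (F *m F) *m v = 0 <-> F *m v = 0.
Proof.
have W_even : W \o -%R = W.
  by apply: funext => x; rewrite /= !hWU /eucl2 !mxE !sqrrN.
case: N hN xh H1 H2span H2indep H3 H4 => [//|n] hN xh _ H2span _ _ H4 F v.
split=> [|Fv0]; last by rewrite -mulmxA Fv0 mulmx0.
rewrite -mulmxA; apply: FBB_sq_mul_eq0 => //.
- exact: Gmx_sym.
- by apply/H2span; exists 1, 0, 0; rewrite scale1r !scale0r !addr0.
- by apply/H2span; exists 0, 1, 0; rewrite scale1r !scale0r add0r addr0.
- by apply/H2span; exists 0, 0, 1; rewrite scale1r !scale0r !add0r.
- by move=> u /H2span.
- exact: H4.
- by rewrite hm0 gt_eqF // divr_gt0.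
Qed.
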